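(* Let $\mathcal A$ be an NBA and let $R$ be a strict partial order on its states with $R\subseteq\ \subseteq^{\mathrm{bw\text{-}di}}$. Then $P(R,\mathrm{id})$ is good for pruning, i.e. $\mathcal L(\mathrm{Prune}(\mathcal A,P(R,\mathrm{id})))=\mathcal L(\mathcal A)$. In particular this holds for $R$ the strict part of backward direct trace inclusion.
   Context: An NBA is $\mathcal A=(\Sigma,Q,I,F,\delta)$, $\delta\subseteq Q\times\Sigma\times Q$, assumed forward and backward complete; initial traces start in $I$, fair traces are infinite and visit $F$ infinitely often, the language is the set of infinite words with an initial fair trace. Backward direct trace inclusion: $p\subseteq^{\mathrm{bw\text{-}di}}q$ iff for every finite word $\sigma_0\cdots\sigma_{m-1}$ and every initial finite trace $p_0\xrightarrow{\sigma_0}\cdots\xrightarrow{\sigma_{m-1}}p_m=p$ there is an initial finite trace $q_0\xrightarrow{\sigma_0}\cdots\xrightarrow{\sigma_{m-1}}q_m=q$ with $p_i\in F\Rightarrow q_i\in F$ for all $0\le i\le m$. Strict part: $p\subseteq q$ and not $q\subseteq p$. For $P\subseteq\delta\times\delta$, $\mathrm{Prune}(\mathcal A,P)$ has transition set $\{t\in\delta:\nexists t'\in\delta,\ (t,t')\in P\}$. For $R_b,R_f\subseteq Q\times Q$, $P(R_b,R_f)=\{((p,\sigma,r),(p',\sigma,r'))\in\delta\times\delta:p\,R_b\,p',\ r\,R_f\,r'\}$; $\mathrm{id}$ is the identity relation. *)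

From mathcomp Require Import all_boot.
Set Implicit Arguments.
Unset Strict Implicit.
Unset Printing Implicit Defensive.

Record NBA (Sigma Q : finType) := mkNBA {
  init : Q -> Prop;
  final : Q -> Prop;
  trans : Q -> Sigma -> Q -> Prop
}.

Section NBADefs.
Variables (Sigma Q : finType).
Implicit Types (A : NBA Sigma Q).

Definition transition : Type := (Q * Sigma * Q)%type.
Definition in_delta A (t : transition) : Prop :=
  let: (p, a, r) := t in trans A p a r.

Definition forward_complete A : Prop :=
  forall (p : Q) (a : Sigma), exists r, trans A p a r.
Definition backward_complete A : Prop :=
  forall (r : Q) (a : Sigma), exists p, trans A p a r.

Definition is_trace A (w : nat -> Sigma) (rho : nat -> Q) : Prop :=
  forall i, trans A (rho i) (w i) (rho i.+1).

Definition fair A (rho : nat -> Q) : Prop :=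
  forall n, exists m, n <= m /\ final A (rho m).

Definition accepts A (w : nat -> Sigma) : Prop :=
  exists rho : nat -> Q, init A (rho 0) /\ is_trace A w rho /\ fair A rho.

(* Backward direct trace inclusion p ⊆^{bw-di} q. A finite trace of length m
   is given by the first m+1 values of a function nat -> Q, the word by the
   first m letters of a function nat -> Sigma. *)
Definition bwdi A (p q : Q) : Prop :=
  forall (m : nat) (w : nat -> Sigma) (ps : nat -> Q),
    init A (ps 0) ->
    (forall i, i < m -> trans A (ps i) (w i) (ps i.+1)) ->
    ps m = p ->
    exists qs : nat -> Q,
      init A (qs 0) /\
      (forall i, i < m -> trans A (qs i) (w i) (qs i.+1)) /\
      qs m = q /\
      (forall i, i <= m -> final A (ps i) -> final A (qs i)).

Definition strict_part (R : Q -> Q -> Prop) (p q : Q) : Prop :=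
  R p q /\ ~ R q p.

Definition strict_partial_order (R : Q -> Q -> Prop) : Prop :=
  (forall p, ~ R p p) /\ (forall p q r, R p q -> R q r -> R p r).

Definition Prel A (Rb Rf : Q -> Q -> Prop) (t t' : transition) : Prop :=
  let: (p, a, r) := t in
  let: (p', a', r') := t' in
  in_delta A t /\ in_delta A t' /\ a = a' /\ Rb p p' /\ Rf r r'.

Definition idrel (p q : Q) : Prop := p = q.

Definition Prune A (P : transition -> transition -> Prop) : NBA Sigma Q :=
  mkNBA (init A) (final A)
    (fun p a r => trans A p a r /\
       ~ (exists t', in_delta A t' /\ P (p, a, r) t')).

Definition same_language (A B : NBA Sigma Q) : Prop :=
  forall w, accepts A w <-> accepts B w.

End NBADefs.

(* Every
   initial finite trace of A can be replaced by an initial finite trace of the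
   pruned automaton over the same word, ending in the same state and visiting
   F at least where the original does: by induction on the length, route the
   prefix through an R-maximal predecessor of the last state among those
   reachable by a trace that still dominates the prefix.  Its last transition
   is not pruned, since a dominating transition would start in an R-larger
   state, which by backward trace inclusion is again such a predecessor.
   König's lemma over the finite state space then assembles these finite
   traces into an infinite one of the pruned automaton that is accepting
   whenever the original run is. *)
From mathcomp Require Import all_boot.
From mathcomp Require Import zify.
From Stdlib Require Import Classical ClassicalEpsilon.
Set Implicit Arguments.
Unset Strict Implicit.
Unset Printing Implicit Defensive.

Lemma strict_partial_order_maximal (T : finType) (R : T -> T -> Prop)
    (S : T -> Prop) (p : T) :
  strict_partial_order R -> S p ->
  exists2 m, S m & forall q, S q -> ~ R m q.
Proof.
move=> [irrR trR].
pose above x y : bool := if excluded_middle_informative (R x y) then true else false.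
have aboveP x y : above x y <-> R x y.
  by rewrite /above; case: excluded_middle_informative.
pose height x := #|[pred y | above x y]|.
have height_decr x y : R x y -> height y < height x.
  move=> Rxy; apply: proper_card; apply/properP; split.
    apply/subsetP=> z; rewrite !inE => /aboveP Ryz; apply/aboveP; exact: trR Ryz.
  exists y; rewrite !inE; first exact/aboveP.
  by apply/negP => /aboveP /irrR.
elim: {p}(height p).+1 {-2}p (ltnSn (height p)) => // k IHk p ltpk Sp.
case: (classic (exists2 q, S q & R p q)) => [[q Sq Rpq] | no_above].
  by apply: (IHk q) => //; have := height_decr _ _ Rpq; lia.
by exists p => // q Sq Rpq; apply: no_above; exists q.
Qed.

Lemma strict_partial_order_strict_part (T : finType) (R : T -> T -> Prop) :
  (forall p q r, R p q -> R q r -> R p r) ->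
  strict_partial_order (strict_part R).
Proof.
move=> trR; split=> [p [] // | p q r [Rpq nRqp] [Rqr nRrq]].
split; first exact: trR Rpq Rqr.
by move=> Rrp; apply: nRqp; exact: trR Rqr Rrp.
Qed.

Section Traces.
Variables (Sigma Q : finType).
Implicit Types (A B : NBA Sigma Q) (w : nat -> Sigma) (rho tau : nat -> Q).

Definition init_path B w tau m : Prop :=
  init B (tau 0) /\ forall i, i < m -> trans B (tau i) (w i) (tau i.+1).

Definition dominates A rho tau m : Prop :=
  forall i, i <= m -> final A (rho i) -> final A (tau i).

Lemma init_path_le B w tau m n : init_path B w tau m -> n <= m -> init_path B w tau n.
Proof. by move=> [tau0 steps] le_nm; split=> // i lt_in; apply: steps; lia. Qed.

Lemma init_path_eq B w tau tau' m :
  (forall i, i <= m -> tau i = tau' i) -> init_path B w tau m -> init_path B w tau' m.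
Proof.
move=> eq_tau [tau0 steps]; split; first by rewrite -eq_tau.
by move=> i lt_im; rewrite -!eq_tau; [exact: steps | lia | lia].
Qed.

Lemma bwdi_trans A p q r : bwdi A p q -> bwdi A q r -> bwdi A p r.
Proof.
move=> Hpq Hqr m w ps ps0 ps_steps psm.
have [qs [qs0 [qs_steps [qsm dom_pq]]]] := Hpq m w ps ps0 ps_steps psm.
have [rs [rs0 [rs_steps [rsm dom_qr]]]] := Hqr m w qs qs0 qs_steps qsm.
by exists rs; do 3!split=> //; move=> i le_im /(dom_pq i le_im); exact: dom_qr.
Qed.

Lemma accepts_Prune A P w : accepts (Prune A P) w -> accepts A w.
Proof.
case=> rho [rho0 [steps fair_rho]]; exists rho; split=> //; split=> // i.
by case: (steps i).
Qed.

Definition extendable B w (C : nat -> Q -> Prop) (s : nat -> Q) n : Prop :=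
  forall N, n <= N -> exists2 tau, init_path B w tau N /\ (forall i, i <= N -> C i (tau i))
                                 & forall i, i < n -> tau i = s i.

Definition upd (s : nat -> Q) n q : nat -> Q := fun i => if i == n then q else s i.

Lemma extendable_upd B w C s n :
  extendable B w C s n -> exists q, extendable B w C (upd s n q) n.+1.
Proof.
move=> Hs; apply: NNPP => no_ext.
have bound q : exists N, n.+1 <= N /\
    ~ exists2 tau, init_path B w tau N /\ (forall i, i <= N -> C i (tau i))
                 & forall i, i < n.+1 -> tau i = upd s n q i.
  apply: NNPP => Hq; apply: no_ext; exists q => N le_nN.
  by apply: NNPP => Hn; apply: Hq; exists N.
pose Nq q := proj1_sig (constructive_indefinite_description _ (bound q)).
have NqP q := proj2_sig (constructive_indefinite_description _ (bound q)).
have [tau [path_tau C_tau] eq_tau] := Hs (maxn n (\max_q Nq q)) (leq_maxl _ _).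
have [_ []] := NqP (tau n).
have le_N : Nq (tau n) <= maxn n (\max_q Nq q).
  by have := leq_bigmax (F := Nq) (tau n); lia.
exists tau; first split; first exact: init_path_le le_N.
  by move=> i le_i; apply: C_tau; exact: leq_trans le_i le_N.
by move=> i lt_in; rewrite /upd; case: eqP => [-> // | ne_in]; apply: eq_tau; lia.
Qed.

Lemma koenig B w (C : nat -> Q -> Prop) :
  (forall N, exists2 tau, init_path B w tau N & forall i, i <= N -> C i (tau i)) ->
  exists rho, init B (rho 0) /\ is_trace B w rho /\ forall i, C i (rho i).
Proof.
move=> paths; have [t0 _ _] := paths 0.
have next s n : exists q, extendable B w C s n -> extendable B w C (upd s n q) n.+1.
  case: (classic (extendable B w C s n)) => [/extendable_upd [q Hq] | Hn].
    by exists q.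
  by exists (t0 0).
pose nxt s n := proj1_sig (constructive_indefinite_description _ (next s n)).
have nxtP s n := proj2_sig (constructive_indefinite_description _ (next s n)).
pose sq := fix sq n := if n is n'.+1 then upd (sq n') n' (nxt (sq n') n') else t0.
have sq_prefix n : extendable B w C (sq n) n.
  elim: n => [|n IHn] /=; last exact: nxtP.
  by move=> N _; have [tau ? ?] := paths N; exists tau.
have sq_stable i k : sq (i.+1 + k) i = sq i.+1 i.
  by elim: k => [|k IHk]; rewrite ?addn0 // addnS /= /upd; case: eqP => [|_]; [lia|].
pose rho i := sq i.+1 i.
have rho_ok N : init_path B w rho N /\ forall i, i <= N -> C i (rho i).
  have [tau [path_tau C_tau] eq_tau] := sq_prefix N.+1 N.+1 (leqnn _).
  have tau_rho i : i <= N -> tau i = rho i.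
    by move=> le_iN; rewrite eq_tau ?ltnS // /rho -(sq_stable i (N - i)); congr sq; lia.
  split; first by apply: init_path_eq tau_rho (init_path_le path_tau (leqnSn N)).
  by move=> i le_iN; rewrite -tau_rho //; apply: C_tau; lia.
exists rho; split; first by case: (rho_ok 0) => [[]].
split=> i; first by case: (rho_ok i.+1) => [[_ steps] _]; exact: steps.
by case: (rho_ok i) => _; apply.
Qed.

Section Pruning.
Variables (A : NBA Sigma Q) (R : Q -> Q -> Prop).
Hypothesis spoR : strict_partial_order R.
Hypothesis R_bwdi : forall p q, R p q -> bwdi A p q.

Let A' := Prune A (Prel A R (@idrel Q)).

Lemma Prune_dominating_path w ps m :
  init_path A w ps m ->
  exists qs, [/\ init_path A' w qs m, qs m = ps m & dominates A ps qs m].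
Proof.
elim: m ps => [|m IHm] ps [ps0 ps_steps].
  by exists ps; split=> //; split=> // i; rewrite ltn0.
pose S p := trans A p (w m) (ps m.+1) /\
  exists2 sg, init_path A w sg m & sg m = p /\ dominates A ps sg m.
have S_psm : S (ps m).
  split; first exact: ps_steps.
  exists ps; first by split=> // i lt_im; apply: ps_steps; lia.
  by split=> // i.
have [p [p_step [sg path_sg [sgm dom_sg]]] p_max] :=
  strict_partial_order_maximal spoR S_psm.
have [qs [[qs0 qs_steps] qsm dom_qs]] := IHm sg path_sg.
have step_kept : trans A' p (w m) (ps m.+1).
  split=> // [[[[p'' a''] r'']] [step'' /= [_ [_ [eq_a [Rpp'' eq_r]]]]]].
  rewrite /idrel in eq_r; subst a'' r''.
  have [sg' [sg'0 [sg'_steps [sg'm dom']]]] := R_bwdi Rpp'' path_sg.1 path_sg.2 sgm.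
  apply: (p_max p'') Rpp''; split=> //.
  by exists sg'; split=> // i le_im /(dom_sg i le_im); apply: dom'.
exists (upd qs m.+1 (ps m.+1)); split; rewrite /upd ?eqxx //.
- split=> // i lt_im1; rewrite ifN_eq; last by apply/eqP; lia.
  have [lt_im | ->] : i < m \/ i = m by lia.
    by rewrite ifN_eq; [exact: qs_steps | apply/eqP; lia].
  by rewrite eqxx qsm sgm.
- move=> i le_im1 Fpsi; case: eqP => [<- // | ne_i].
  by apply: dom_qs; [lia | apply: dom_sg => //; lia].
Qed.

Lemma Prune_same_language : same_language A' A.
Proof.
move=> w; split; first exact: accepts_Prune.
case=> rho [rho0 [rho_trace fair_rho]].
have [rho' [rho'0 [trace' dom']]] :
    exists rho', init A' (rho' 0) /\ is_trace A' w rho' /\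
      forall i, final A (rho i) -> final A (rho' i).
  apply: (koenig (C := fun i q => final A (rho i) -> final A q)) => N.
  have rho_path : init_path A w rho N by split=> // i _; exact: rho_trace.
  by have [qs [path_qs _ dom_qs]] := Prune_dominating_path rho_path; exists qs.
exists rho'; split=> //; split=> // n.
by have [k [le_nk Fk]] := fair_rho n; exists k; split=> //; apply: dom'.
Qed.

End Pruning.
End Traces.

Theorem theorem5p2 :
  forall (Sigma Q : finType) (A : NBA Sigma Q),
    forward_complete A -> backward_complete A ->
    (forall R : Q -> Q -> Prop,
        strict_partial_order R ->
        (forall p q, R p q -> bwdi A p q) ->
        same_language (Prune A (Prel A R (@idrel Q))) A)
    /\
    same_language (Prune A (Prel A (strict_part (bwdi A)) (@idrel Q))) A.
Proof.
move=> Sigma Q A _ _; split=> [R spoR R_bwdi | ]; first exact: Prune_same_language.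
apply: Prune_same_language; last by move=> p q [].
exact/strict_partial_order_strict_part/bwdi_trans.
Qed.
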